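(* Let $p$ be a prime number and let $A=\{1,p,p^2,p^3,\dots\}$. For every positive integer $n$, $$N^p_A(n)=\sum_{k=0}^{n-1}p_A(k)\big(\vartheta_p(n-k)+1\big).$$
   Context: For a set $A$ of positive integers, $N^p_A(n)$ is the total number of parts, summed over all partitions of $n$ with all parts in $A$, and $p_A(n)$ is the number of partitions of $n$ with parts in $A$, with $p_A(0)=1$. $\vartheta_p(m)$ is the $p$-adic valuation of $m$, i.e. the exponent of $p$ in $m$. *)

From mathcomp Require Import all_boot.
Set Implicit Arguments. Unset Strict Implicit. Unset Printing Implicit Defensive.

Definition is_partition (n : nat) (s : seq nat) : bool :=
  [&& sorted geq s, all (fun x => 0 < x) s & sumn s == n].

Fixpoint parts_le (fuel n m : nat) : seq (seq nat) :=
  match fuel with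
  | 0 => if n == 0 then [:: [::]] else [::]
  | fuel'.+1 =>
      if n == 0 then [:: [::]] else
      flatten [seq [seq k :: s | s <- parts_le fuel' (n - k) k]
              | k <- iota 1 (minn m n)]
  end.

Definition partitions (n : nat) : seq (seq nat) := parts_le n n n.

Definition powp (p m : nat) : bool := has (fun k => p ^ k == m) (iota 0 m.+1).

Definition partsA (p n : nat) : seq (seq nat) :=
  [seq s <- partitions n | all (powp p) s].

Definition pA (p n : nat) : nat := size (partsA p n).

Definition NA (p n : nat) : nat := sumn [seq size s | s <- partsA p n].

Lemma partitions_5 : size (partitions 5) = 7. Proof. by []. Qed.
Lemma partitions_spec_5 :
  all (is_partition 5) (partitions 5) && uniq (partitions 5). Proof. by []. Qed.
Lemma pA_2_4 : pA 2 4 = 4. Proof. by vm_compute. Qed.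
Lemma NA_2_4 : NA 2 4 = 10. Proof. by vm_compute. Qed.

From mathcomp Require Import all_boot zify.

Set Implicit Arguments. Unset Strict Implicit. Unset Printing Implicit Defensive.

(* Sort the parts of all A-partitions of n by value a and multiplicity: for
   d >= 1, the A-partitions of n with at least d parts equal to a correspond
   bijectively to the A-partitions of n - d a (add or remove d copies of a).
   Hence N_A(n) = sum_{a in A} sum_{d >= 1} p_A(n - d a), and collecting the
   terms with n - d a = k gives N_A(n) = sum_{k < n} p_A(k) * #{a in A : a | n - k}.
   For A = {1, p, p^2, ...} the divisors of m in A are p^0, ..., p^(v_p(m)). *)

Lemma geq_trans : transitive geq.
Proof. exact: rev_trans leq_trans. Qed.

Lemma geq_anti : antisymmetric geq.
Proof. by move=> m n /andP[/= nm mn]; apply/anti_leq/andP. Qed.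

Lemma geq_total : total geq.
Proof. by move=> m n; rewrite /= orbC leq_total. Qed.

Lemma count_mem_geP (T : eqType) (a : T) d s :
  reflect (exists t, perm_eq s (nseq d a ++ t)) (d <= count_mem a s).
Proof.
apply: (iffP idP) => [le_d_count | [t /permP/(_ (pred1 a))->]]; last first.
  by rewrite count_cat count_nseq /= eqxx mul1n leq_addr.
exists (nseq (count_mem a s - d) a ++ [seq x <- s | x != a]).
rewrite catA -nseqD subnKC // perm_sym.
have <- : [seq x <- s | x == a] = nseq (count_mem a s) a.
  by elim: s {le_d_count} => //= x s ->; case: eqP => [->|].
exact/permPl/(perm_filterC (pred1 a)).
Qed.

Lemma count_mem_mul_leq_sumn a s : count_mem a s * a <= sumn s.
Proof.
have /count_mem_geP[t /perm_sumn->] := leqnn (count_mem a s).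
by rewrite sumn_cat sumn_nseq mulnC leq_addr.
Qed.

Lemma mem_leq_sumn x s : x \in s -> x <= sumn s.
Proof.
rewrite -has_pred1 has_count => count_gt0.
exact: leq_trans (leq_pmull _ count_gt0) (count_mem_mul_leq_sumn x s).
Qed.

Lemma sum_nat_of_bool (T : Type) (r : seq T) (P : pred T) :
  \sum_(i <- r) (P i : nat) = count P r.
Proof. by rewrite -sumn_count sumnE big_map. Qed.

Lemma size_sum_count_mem (T : eqType) (r s : seq T) :
  uniq r -> {subset s <= r} -> size s = \sum_(a <- r) count_mem a s.
Proof.
move=> uniq_r; elim: s => [_|x s IHs sub_xs]; first by rewrite big1.
rewrite /= big_split /= -IHs => [|y sy]; last by apply: sub_xs; rewrite inE sy orbT.
by rewrite sum_nat_of_bool (eq_count (eq_sym x)) count_uniq_mem // sub_xs ?mem_head.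
Qed.

Lemma sum_leq_minn c n : \sum_(1 <= d < n.+1) (d <= c : nat) = minn c n.
Proof.
elim: n => [|n IHn]; first by rewrite big_geq ?minn0.
by rewrite big_nat_recr //= IHn; case: leqP; lia.
Qed.

Lemma sum_eq_mul (T : eqType) (r : seq T) x (F : T -> nat) :
  uniq r -> \sum_(i <- r) (i == x) * F i = (x \in r) * F x.
Proof.
move=> uniq_r; have [xr | xr] := boolP (x \in r).
  by rewrite (bigD1_seq x) //= eqxx big1 ?addn0 // => i /negbTE ->.
by rewrite big1_seq // => i /andP[_ ir]; case: eqP ir xr => // ->->.
Qed.

Lemma sum_subn_eq_mul n e F : 0 < e ->
  \sum_(0 <= k < n) (n - k == e) * F k = if e <= n then F (n - e) else 0.
Proof.
move=> e_gt0; case: leqP => [le_en | lt_ne]; last first.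
  by rewrite big1 // => k _; case: eqP; [lia | rewrite mul0n].
rewrite (@eq_big_nat _ _ _ _ _ _ (fun k => (k == n - e) * F k)) => [|k /andP[_ lt_kn]].
  rewrite sum_eq_mul ?iota_uniq // mem_index_iota /=.
  have -> : n - e < n by lia.
  exact: mul1n.
by congr (_ * _); apply/eqP/eqP; lia.
Qed.

Lemma sum_mul_eq_dvdn n a m : 0 < a -> 0 < m -> m <= n ->
  \sum_(1 <= d < n.+1) (m == d * a : nat) = (a %| m).
Proof.
move=> a_gt0 m_gt0 le_mn; rewrite sum_nat_of_bool.
have [/dvdnP[q def_m] | not_dvd] := boolP (a %| m); last first.
  rewrite (@eq_count _ _ pred0) ?count_pred0 // => d /=.
  by apply/negbTE; apply: contra not_dvd => /eqP->; apply: dvdn_mull.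
rewrite (@eq_count _ _ (pred1 q)) => [|d]; last first.
  by rewrite def_m /= eqn_mul2r eqn0Ngt a_gt0 eq_sym.
rewrite count_uniq_mem ?iota_uniq // mem_index_iota.
have q_gt0 : 0 < q by move: m_gt0; rewrite def_m muln_gt0 => /andP[].
by rewrite q_gt0 ltnS (leq_trans _ le_mn) // def_m leq_pmulr.
Qed.

Lemma mem_parts_le0 fuel m s :
  (s \in parts_le fuel 0 m) =
  [&& sorted geq s, all (fun x => 0 < x) s, sumn s == 0 & all (fun x => x <= m) s].
Proof. by case: fuel => [|fuel]; rewrite /= inE; case: s => [|[|x] s]; rewrite ?andbF. Qed.

Lemma mem_parts_le fuel n m s : n <= fuel ->
  (s \in parts_le fuel n m) =
  [&& sorted geq s, all (fun x => 0 < x) s, sumn s == n & all (fun x => x <= m) s].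
Proof.
elim: fuel n m s => [|fuel IHfuel] n m s le_n_fuel.
  by move: le_n_fuel; rewrite leqn0 => /eqP->; apply: mem_parts_le0.
have [->|n_gt0] := posnP n; first exact: mem_parts_le0.
have -> : parts_le fuel.+1 n m =
    [seq k :: t | k <- iota 1 (minn m n), t <- parts_le fuel (n - k) k].
  by rewrite /= gtn_eqF.
apply/allpairsPdep/idP => [[k [t [k_in t_in ->]]] | ].
  rewrite mem_iota in k_in; rewrite IHfuel in t_in; last by lia.
  case/and4P: t_in => sorted_t pos_t /eqP sum_t le_t_k.
  rewrite /= (path_sortedE geq_trans) le_t_k sorted_t pos_t /=.
  apply/and3P; split; [lia | apply/eqP; lia | ].
  by apply/andP; split; [lia | apply/allP => y /(allP le_t_k) /=; lia].
case: s => [|x t]; first by rewrite /= eq_sym gtn_eqF.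
rewrite /= (path_sortedE geq_trans).
case/and4P => /andP[le_t_x sorted_t] /andP[x_gt0 pos_t] /eqP sum_xt /andP[le_xm le_t_m].
exists x, t; split => //; first by rewrite mem_iota; lia.
by rewrite IHfuel ?le_t_x ?sorted_t ?pos_t ?andbT //=; [apply/eqP | ]; lia.
Qed.

Lemma uniq_parts_le fuel n m : uniq (parts_le fuel n m).
Proof.
elim: fuel n m => [|fuel IHfuel] n m /=; first by case: (n == 0).
case: (n == 0) => //.
apply: (@allpairs_uniq_dep _ (fun _ => _) _ (fun k t => k :: t)) => //.
- exact: iota_uniq.
- by move=> [a u] [b v] _ _ /= [-> ->].
Qed.

Section PartitionsWithPartsIn.

Variable P : pred nat.

(* [partsA p], [pA p] and [NA p] are [partsP], [pP] and [NP] for [P := powp p]. *)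
Definition partsP n := [seq s <- partitions n | all P s].
Definition pP n := size (partsP n).
Definition NP n := sumn [seq size s | s <- partsP n].

Definition unordered_partition n (s : seq nat) :=
  [&& all (fun x => 0 < x) s, all P s & sumn s == n].

Lemma perm_unordered_partition n s1 s2 :
  perm_eq s1 s2 -> unordered_partition n s1 = unordered_partition n s2.
Proof.
by move=> eq_s12; rewrite /unordered_partition !(perm_all _ eq_s12) (perm_sumn eq_s12).
Qed.

Lemma unordered_partition_nseq_cat d a n t : 0 < a -> P a ->
  unordered_partition (d * a + n) (nseq d a ++ t) = unordered_partition n t.
Proof.
move=> a_gt0 Pa; rewrite /unordered_partition !all_cat !all_nseq a_gt0 Pa !orbT.
by rewrite sumn_cat sumn_nseq mulnC eqn_add2l.
Qed.

Lemma mem_partsP n s : (s \in partsP n) = sorted geq s && unordered_partition n s.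
Proof.
rewrite mem_filter /partitions mem_parts_le // /unordered_partition.
have [sum_s | _] := eqVneq (sumn s) n; last by rewrite !andbF.
have -> : all (fun x => x <= n) s by apply/allP => x /mem_leq_sumn; rewrite sum_s.
by case: (all P s); rewrite ?andbT ?andbF.
Qed.

Lemma mem_partsP_sort n s : (sort geq s \in partsP n) = unordered_partition n s.
Proof.
rewrite mem_partsP (sort_sorted geq_total) /=.
exact/perm_unordered_partition/permPl/perm_sort.
Qed.

Lemma uniq_partsP n : uniq (partsP n).
Proof. exact/filter_uniq/uniq_parts_le. Qed.

Definition add_copies d a t := sort geq (nseq d a ++ t).

Lemma add_copies_inj d a m : {in partsP m &, injective (add_copies d a)}.
Proof.
move=> t1 t2; rewrite !mem_partsP => /andP[sorted_t1 _] /andP[sorted_t2 _].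
move/(perm_sortP geq_total geq_trans geq_anti); rewrite perm_cat2l.
exact: (sorted_eq geq_trans geq_anti sorted_t1 sorted_t2).
Qed.

Lemma mem_map_add_copies d a n s : 0 < a -> P a -> d * a <= n ->
  (s \in [seq add_copies d a t | t <- partsP (n - d * a)]) =
  (d <= count_mem a s) && (s \in partsP n).
Proof.
move=> a_gt0 Pa le_da_n; have split_n : n = d * a + (n - d * a) by rewrite subnKC.
apply/mapP/andP => [[t t_in ->] | [/count_mem_geP[t perm_s] s_in]].
  split; first by apply/count_mem_geP; exists t; apply/permEl/perm_sort.
  rewrite mem_partsP_sort split_n unordered_partition_nseq_cat //.
  by move: t_in; rewrite mem_partsP => /andP[].
move: s_in; rewrite mem_partsP => /andP[sorted_s part_s].
exists (sort geq t).
  rewrite mem_partsP_sort -(unordered_partition_nseq_cat d (n - d * a) t a_gt0 Pa) -split_n.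
  by rewrite -(perm_unordered_partition _ perm_s).
rewrite -[LHS](sorted_sort geq_trans sorted_s).
apply/(perm_sortP geq_total geq_trans geq_anti).
by rewrite (permPl perm_s) perm_cat2l perm_sym; apply/permEl/perm_sort.
Qed.

Lemma count_partsP_count_mem_ge d a n : 0 < a -> P a ->
  count (fun s => d <= count_mem a s) (partsP n) =
  if d * a <= n then pP (n - d * a) else 0.
Proof.
move=> a_gt0 Pa; case: ifPn => [le_da_n | lt_n_da].
  rewrite -size_filter /pP -(size_map (add_copies d a)).
  apply/perm_size/uniq_perm => [||s]; first exact/filter_uniq/uniq_partsP.
    by rewrite map_inj_in_uniq ?uniq_partsP //; apply: add_copies_inj.
  by rewrite mem_filter mem_map_add_copies.
rewrite (@eq_in_count _ _ pred0) ?count_pred0 // => s.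
rewrite mem_partsP => /andP[_ /and3P[_ _ /eqP sum_s]].
apply/negbTE; apply: contra lt_n_da => le_d_count; rewrite -sum_s.
exact: leq_trans (leq_mul le_d_count (leqnn a)) (count_mem_mul_leq_sumn a s).
Qed.

Lemma size_partsP n s : s \in partsP n ->
  size s = \sum_(1 <= a < n.+1 | P a) \sum_(1 <= d < n.+1) (d <= count_mem a s : nat).
Proof.
rewrite mem_partsP => /and3P[_ pos_s /andP[Ps /eqP sum_s]].
rewrite -big_filter (@size_sum_count_mem _ [seq a <- index_iota 1 n.+1 | P a]).
- apply: eq_big_seq => a; rewrite mem_filter mem_index_iota => /andP[_ /andP[a_gt0 _]].
  rewrite sum_leq_minn; apply/esym/minn_idPl; rewrite -sum_s.
  exact: leq_trans (leq_pmulr _ a_gt0) (count_mem_mul_leq_sumn a s).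
- exact/filter_uniq/iota_uniq.
move=> x x_s; rewrite mem_filter mem_index_iota (allP Ps) // (allP pos_s) //=.
by rewrite ltnS -sum_s mem_leq_sumn.
Qed.

Lemma sum_dvdn_count_divisors n m : 0 < m -> m <= n ->
  \sum_(1 <= a < n.+1 | P a) (a %| m : nat) = count P (divisors m).
Proof.
move=> m_gt0 le_mn; rewrite big_mkcond.
rewrite (eq_bigr (fun a => (P a && (a %| m) : nat))) => [|a _]; last by case: (P a).
rewrite sum_nat_of_bool -[LHS](count_filter P (dvdn^~ m)).
suff /permP-> : perm_eq [seq a <- index_iota 1 n.+1 | a %| m] (divisors m) by [].
apply: uniq_perm => [||a].
- exact/filter_uniq/iota_uniq.
- exact: divisors_uniq.
rewrite mem_filter mem_index_iota -dvdn_divisors //.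
have [dvd_am | //] := boolP (a %| m).
by rewrite (dvdn_gt0 m_gt0) //= ltnS (leq_trans (dvdn_leq m_gt0 dvd_am)).
Qed.

Theorem NP_sum_divisors n : NP n = \sum_(0 <= k < n) pP k * count P (divisors (n - k)).
Proof.
rewrite /NP sumnE big_map (eq_big_seq _ (@size_partsP n)) exchange_big /=.
transitivity (\sum_(1 <= a < n.+1 | P a) \sum_(1 <= d < n.+1)
                 \sum_(0 <= k < n) (n - k == d * a) * pP k).
  rewrite big_nat_cond [RHS]big_nat_cond; apply: eq_bigr => a /andP[/andP[a_gt0 _] Pa].
  rewrite exchange_big; apply: eq_big_nat => d /andP[d_gt0 _].
  rewrite (sum_nat_of_bool (partsP n) (fun s => d <= count_mem a s)).
  by rewrite count_partsP_count_mem_ge // sum_subn_eq_mul // muln_gt0 d_gt0.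
rewrite (eq_bigr _ (fun a _ => exchange_big _ _ _ _ _ _)) exchange_big /=.
apply: eq_big_nat => k /andP[_ lt_kn].
rewrite -(@sum_dvdn_count_divisors n) ?subn_gt0 ?leq_subr // big_distrr.
rewrite big_nat_cond [RHS]big_nat_cond; apply: eq_bigr => a /andP[/andP[a_gt0 _] _].
rewrite -(@sum_mul_eq_dvdn n) ?subn_gt0 ?leq_subr // big_distrr.
by apply: eq_bigr => d _; rewrite mulnC.
Qed.

End PartitionsWithPartsIn.

Lemma powpP p x : 1 < p -> reflect (exists k, x = p ^ k) (powp p x).
Proof.
move=> p_gt1; apply: (iffP hasP) => [[k _ /eqP <-] | [k ->]]; first by exists k.
by exists k; rewrite ?eqxx // mem_iota add0n ltnS /= ltnW // ltn_expl.
Qed.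

Lemma count_powp_divisors p m : prime p -> 0 < m ->
  count (powp p) (divisors m) = logn p m + 1.
Proof.
move=> p_prime m_gt0; have p_gt1 := prime_gt1 p_prime.
rewrite -size_filter addn1 -(size_iota 0 (logn p m).+1)
  -(size_map (expn p) (iota 0 _)).
apply/perm_size/uniq_perm => [||x].
- exact/filter_uniq/divisors_uniq.
- by rewrite map_inj_uniq ?iota_uniq //; apply: expnI.
rewrite mem_filter; apply/andP/mapP => [[/(powpP _ p_gt1)[k ->] dvd_pk] | [k k_in ->]].
  by exists k; rewrite // mem_iota ltnS -pfactor_dvdn // dvdn_divisors.
split; first by apply/(powpP _ p_gt1); exists k.
by rewrite -dvdn_divisors // pfactor_dvdn // -ltnS; rewrite mem_iota in k_in.
Qed.

Theorem corollary3 (p n : nat) (hp : prime p) (hn : 0 < n) :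
  NA p n = \sum_(0 <= k < n) pA p k * (logn p (n - k) + 1).
Proof.
(* The identity also holds for n = 0. *)
have -> : NA p n = NP (powp p) n by [].
rewrite NP_sum_divisors; apply: eq_big_nat => k /andP[_ lt_kn].
by rewrite count_powp_divisors // subn_gt0.
Qed.
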